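(* Let $k$ be an integer with $9\le k\le 17$. For every $k$-uniform hypergraph $H=(V,E)$ with $m=|E|$, \[100\,\tau(H) \le 9.5976\,n_1 + 14.8298\,n_2 + 16.1586\,n_3 + 16.6667\,n_{\ge 4} + 16.6667\,m.\]
   Context: A hypergraph $H=(V,E)$ consists of a finite vertex set $V$ and a finite collection $E$ of subsets of $V$ (edges); it is $k$-uniform if every edge has exactly $k$ vertices. The degree of a vertex $v$ is the number of edges containing $v$. For $i\ge 1$, $n_i$ denotes the number of vertices of degree exactly $i$, and $n_{\ge i}=\sum_{j\ge i} n_j$. A transversal is a vertex set meeting every edge; $\tau(H)$ is the minimum size of a transversal. *)

From mathcomp Require Import all_boot.
Set Implicit Arguments. Unset Strict Implicit. Unset Printing Implicit Defensive.

(* A hypergraph on the finite vertex type V with edge collection E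
   (a finite multiset of subsets of V, given as a sequence). *)

Definition kuniform (V : finType) (k : nat) (E : seq {set V}) : bool :=
  all (fun e : {set V} => #|e| == k) E.

Definition degree (V : finType) (E : seq {set V}) (v : V) : nat :=
  count (fun e : {set V} => v \in e) E.

Definition n_deg (V : finType) (E : seq {set V}) (i : nat) : nat :=
  #|[set v : V | degree E v == i]|.

Definition n_deg_ge (V : finType) (E : seq {set V}) (i : nat) : nat :=
  #|[set v : V | i <= degree E v]|.

Definition transversal (V : finType) (E : seq {set V}) (S : {set V}) : bool :=
  all (fun e : {set V} => [exists x, (x \in e) && (x \in S)]) E.

(* tau(H): minimum size of a transversal (the initial value #|V| is an
   upper bound whenever a transversal exists, e.g. when no edge is empty). *)
Definition tau (V : finType) (E : seq {set V}) : nat :=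
  \big[minn/#|V|]_(S : {set V} | transversal E S) #|S|.

From Pilot Require Import Defs.
From mathcomp Require Import all_boot all_order all_algebra.
Import Order.TTheory GRing.Theory Num.Theory.
From mathcomp Require Import zify lra.

(* Greedy argument with a potential.  Give a vertex of degree d the weight
   w(d) = 0, 28, 43, 48, 50 (d = 0, 1, 2, 3, >= 4) and every edge the weight 50;
   the right-hand side is at least 1/300 of the total weight.  Put a vertex
   v of maximum degree d into the transversal and delete the d edges through it.
   Every other vertex u loses t_u <= d of its edges, and since w(a) + t s(D) <=
   w(a + t) for a + t <= D, the weights drop by at least
   w(d) + 50 d + s(d) * sum_u t_u >= w(d) + 50 d + 8 d s(d) >= 300,
   because edges have at least 9 vertices, so sum_u t_u >= 8 d. *)

Lemma sum_if_const_card (T : finType) (P : pred T) c :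
  \sum_(x : T) (if P x then c else 0) = c * #|[set x | P x]|.
Proof.
rewrite -sum1dep_card big_distrr [RHS]big_mkcond /=.
by apply: eq_bigr => x _; case: (P x); rewrite ?muln1.
Qed.

Section Greedy.
Set Implicit Arguments.
Unset Strict Implicit.

Definition deg_weight (d : nat) : nat :=
  match d with 0 => 0 | 1 => 28 | 2 => 43 | 3 => 48 | _ => 50 end.

Definition deg_slope (d : nat) : nat :=
  match d with 0 => 0 | 1 => 28 | 2 => 15 | 3 => 5 | 4 => 2 | _ => 0 end.

Lemma deg_weight_homo : {homo deg_weight : a b / a <= b}.
Proof. by case=> [|[|[|[|a]]]] [|[|[|[|b]]]]. Qed.

Lemma deg_weight_step a t D : a + t <= D ->
  deg_weight a + t * deg_slope D <= deg_weight (a + t).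
Proof.
move=> atD; have [D_ge5 | D_lt5] := leqP 5 D.
  have -> : deg_slope D = 0 by case: D D_ge5 {atD} => [|[|[|[|[|D]]]]].
  by rewrite muln0 addn0 deg_weight_homo ?leq_addr.
by case: a atD => [|[|[|[|[|a]]]]]; case: t => [|[|[|[|[|t]]]]];
  case: D D_lt5 => [|[|[|[|[|D]]]]] //= _; rewrite ?addnS ?addSn ?add0n //=; lia.
Qed.

Lemma deg_weight_gain d : 0 < d -> 300 <= deg_weight d + 50 * d + 8 * d * deg_slope d.
Proof. by case: d => [|[|[|[|[|d]]]]] //= _; lia. Qed.

Variable V : finType.
Implicit Types (E : seq {set V}) (S : {set V}) (u v : V).

Definition potential E := \sum_u deg_weight (degree E u) + 50 * size E.

Definition drop_vertex v E := [seq e <- E | v \notin (e : {set V})].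

Definition codegree v u E := count (fun e : {set V} => (v \in e) && (u \in e)) E.

Lemma degree_drop_vertex E v u :
  degree E u = degree (drop_vertex v E) u + codegree v u E.
Proof.
rewrite /degree /codegree /drop_vertex; elim: E => //= e E ->.
by case: (v \in e) => /=; case: (boolP (u \in e)) => ue /=; rewrite ?ue /=; lia.
Qed.

Lemma degree_drop_vertex_self E v : degree (drop_vertex v E) v = 0.
Proof.
rewrite /degree /drop_vertex count_filter -(count_pred0 E).
by apply: eq_count => e /=; rewrite andbN.
Qed.

Lemma size_drop_vertex E v : size E = size (drop_vertex v E) + degree E v.
Proof. by rewrite /degree /drop_vertex size_filter addnC count_predC. Qed.

Lemma codegree_diag E v : codegree v v E = degree E v.
Proof. by apply: eq_count => e; rewrite andbb. Qed.

Lemma sum_codegree_ge E r v : all (fun e : {set V} => r <= #|e|) E ->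
  r * degree E v <= \sum_u codegree v u E.
Proof.
rewrite /codegree /degree; elim: E => [|e E IH] /=; first by rewrite muln0.
case/andP=> r_e /IH{}IH; rewrite big_split /=.
have -> : \sum_u ((v \in e) && (u \in e) : nat) = (v \in e) * #|e|.
  case: (v \in e); last by rewrite mul0n big1.
  by rewrite mul1n -sum1_card [RHS]big_mkcond; apply: eq_bigr => u _; case: (u \in e).
by case: (v \in e) => /=; lia.
Qed.

Lemma exists_max_degree E : E != [::] -> all (fun e : {set V} => 0 < #|e|) E ->
  exists2 v, 0 < degree E v & forall u, degree E u <= degree E v.
Proof.
case: E => [|e E] // _ /= /andP[/card_gt0P[x xe] _].
have [v _ v_max] := @arg_maxnP V x xpredT (degree (e :: E)) isT.
exists v => [|u]; last exact: v_max.
by apply: leq_trans (v_max x isT); rewrite /degree /= xe.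
Qed.

Lemma transversal_drop_vertex E v S :
  Defs.transversal (drop_vertex v E) S -> Defs.transversal E (v |: S).
Proof.
rewrite /Defs.transversal all_filter => /allP S_tr; apply/allP => e eE.
have [ve | /negbTE vNe] := boolP (v \in e).
  by apply/existsP; exists v; rewrite ve setU11.
have /existsP[x /andP[xe xS]] := implyP (S_tr e eE) (negbT vNe).
by apply/existsP; exists x; rewrite xe setU1r.
Qed.

Lemma sum_deg_weight_drop_vertex E v : (forall u, degree E u <= degree E v) ->
  \sum_u deg_weight (degree (drop_vertex v E) u) + deg_weight (degree E v)
  + deg_slope (degree E v) * \sum_(u | u != v) codegree v u E
  <= \sum_u deg_weight (degree E u).
Proof.
move=> v_max; rewrite (bigD1 v) //= [leqRHS](bigD1 v) //= degree_drop_vertex_self.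
rewrite big_distrr /= -addnA addnCA leq_add2l add0n -big_split leq_sum // => u _.
by rewrite (degree_drop_vertex E v u) mulnC deg_weight_step // -degree_drop_vertex.
Qed.

Lemma potential_drop_vertex E v : all (fun e : {set V} => 9 <= #|e|) E ->
  0 < degree E v -> (forall u, degree E u <= degree E v) ->
  300 + potential (drop_vertex v E) <= potential E.
Proof.
move=> E9 d_gt0 v_max; rewrite /potential (size_drop_vertex E v).
have codeg_ge : 8 * degree E v <= \sum_(u | u != v) codegree v u E.
  by have := sum_codegree_ge v E9; rewrite (bigD1 v) //= codegree_diag; lia.
have := leq_mul (leqnn (deg_slope (degree E v))) codeg_ge.
have := sum_deg_weight_drop_vertex v_max; have := deg_weight_gain d_gt0; lia.
Qed.

Lemma greedy_transversal E : all (fun e : {set V} => 9 <= #|e|) E ->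
  exists2 S, Defs.transversal E S & 300 * #|S| <= potential E.
Proof.
elim: {E}(size E) {-2}E (leqnn (size E)) => [|n IH] E.
  by rewrite leqn0 size_eq0 => /eqP -> _; exists set0; rewrite ?cards0.
move=> E_le E9; have [-> | E_nil] := eqVneq E [::]; first by exists set0; rewrite ?cards0.
have E_pos : all (fun e : {set V} => 0 < #|e|) E.
  by apply: sub_all E9 => e; apply: leq_trans.
have [v d_gt0 v_max] := exists_max_degree E_nil E_pos.
have E'_le : size (drop_vertex v E) <= n by move: E_le; rewrite (size_drop_vertex E v); lia.
have E'9 : all (fun e : {set V} => 9 <= #|e|) (drop_vertex v E).
  by rewrite all_filter; apply: sub_all E9 => e e9; exact/implyP.
have [S S_tr S_le] := IH _ E'_le E'9.
exists (v |: S); first exact: transversal_drop_vertex.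
have := potential_drop_vertex E9 d_gt0 v_max; have := cardsU1 v S.
by case: (v \notin S) => /=; lia.
Qed.

Lemma tau_le_card E S : Defs.transversal E S -> tau E <= #|S|.
Proof.
move=> S_tr; rewrite /tau; have : S \in index_enum {set V} by rewrite mem_index_enum.
elim: (index_enum _) => // S' r IH; rewrite inE big_cons.
case/orP=> [/eqP <- | /IH S_le]; first by rewrite S_tr geq_minl.
by case: ifP => _ //; rewrite geq_min S_le orbT.
Qed.

Lemma sum_deg_weight E :
  \sum_(u : V) deg_weight (degree E u) =
  28 * n_deg E 1 + 43 * n_deg E 2 + 48 * n_deg E 3 + 50 * n_deg_ge E 4.
Proof.
rewrite /n_deg /n_deg_ge -[28 * _]sum_if_const_card -[43 * _]sum_if_const_card.
rewrite -[48 * _]sum_if_const_card -[50 * _]sum_if_const_card -!big_split.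
by apply: eq_bigr => u _; case: (degree E u) => [|[|[|[|[|d]]]]].
Qed.

End Greedy.

Local Open Scope ring_scope.

Theorem mainTheorem5 (k : nat) (V : finType) (E : seq {set V}) :
  (9 <= k <= 17)%N -> kuniform k E ->
  100 * (tau E)%:R <=
    (95976%:R / 10000) * (n_deg E 1)%:R
    + (148298%:R / 10000) * (n_deg E 2)%:R
    + (161586%:R / 10000) * (n_deg E 3)%:R
    + (166667%:R / 10000) * (n_deg_ge E 4)%:R
    + (166667%:R / 10000) * (size E)%:R :> rat.
Proof.
move=> /andP[k_ge9 _] E_unif.
have E9 : all (fun e : {set V} => 9 <= #|e|)%N E.
  by apply: sub_all E_unif => e /eqP ->.
have [S S_tr S_le] := greedy_transversal E9.
have weight_bound : (300 * tau E <= 28 * n_deg E 1 + 43 * n_deg E 2 + 48 * n_deg E 3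
                       + 50 * n_deg_ge E 4 + 50 * size E)%N.
  by rewrite -sum_deg_weight; apply: leq_trans S_le; rewrite leq_mul2l tau_le_card.
have : 300%:R * (tau E)%:R <= 28%:R * (n_deg E 1)%:R + 43%:R * (n_deg E 2)%:R
         + 48%:R * (n_deg E 3)%:R + 50%:R * (n_deg_ge E 4)%:R + 50%:R * (size E)%:R :> rat.
  by rewrite -!natrM -!natrD ler_nat.
have := ler0n rat (n_deg E 1); have := ler0n rat (n_deg E 2).
have := ler0n rat (n_deg E 3); have := ler0n rat (n_deg_ge E 4).
have := ler0n rat (size E); lra.
Qed.
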